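(* Let $X$ be a non-empty set, $R$ a binary relation on $X$, and $\tau$ a compact topology on $X$. Suppose $R$ is upper tc-semicontinuous with respect to $\tau$. Then the family $\mu(\Xi,\widetilde{R})$ of $\widetilde{R}$-maximal strong components of $(X,R)$ is non-empty.
   Context: For a binary relation $R$ on $X$, the transitive closure $\overline{R}$ is defined by: $x\overline{R}y$ iff there exist $K\ge 1$ and $x_0,\dots,x_K\in X$ with $x_0=x$, $x_K=y$, and $x_{k-1}Rx_k$ for all $k\in\{1,\dots,K\}$. $R$ is upper tc-semicontinuous with respect to $\tau$ if for every $x\in X$ the set $\{y\in X: x\overline{R}y\}$ is open in $\tau$. A topology is compact if every open cover of $X$ has a finite subcover. Strong components: define the equivalence relation $x\sim y$ iff $x=y$ or ($x\overline{R}y$ and $y\overline{R}x$). The ground sets of the strong components of $(X,R)$ are the equivalence classes of $\sim$ (so an element lying on no cycle forms a singleton component); they partition $X$. Let $\Xi=\{X_i : i\in I\}$ be the set of these classes. The contraction of $(X,R)$ is $(\Xi,\widetilde{R})$, where $X_i\widetilde{R}X_j$ iff there exist $x\in X_i$, $y\in X_j$ with $xRy$. A class $X_i\in\Xi$ is $\widetilde{R}$-maximal if there is no $X_j\in\Xi$ with $X_j\ne X_i$ and $X_j\widetilde{R}X_i$. $\mu(\Xi,\widetilde{R})$ denotes the family of $\widetilde{R}$-maximal classes in $\Xi$. *)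

From Stdlib Require Import Classical List.

Set Implicit Arguments.

Record topology (X : Type) := {
  t_open : (X -> Prop) -> Prop;
  t_open_full : t_open (fun _ => True);
  t_open_empty : t_open (fun _ => False);
  t_open_inter : forall U V, t_open U -> t_open V -> t_open (fun x => U x /\ V x);
  t_open_union : forall (F : (X -> Prop) -> Prop),
      (forall U, F U -> t_open U) -> t_open (fun x => exists U, F U /\ U x)
}.

Definition compact_top (X : Type) (tau : topology X) : Prop :=
  forall (I : Type) (U : I -> X -> Prop),
    (forall i, t_open tau (U i)) ->
    (forall x, exists i, U i x) ->
    exists l : list I, forall x, exists i, List.In i l /\ U i x.

Definition tc (X : Type) (R : X -> X -> Prop) (x y : X) : Prop :=
  exists (K : nat) (f : nat -> X),
    1 <= K /\ f 0 = x /\ f K = y /\ (forall k, 1 <= k <= K -> R (f (k - 1)) (f k)).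

Definition upper_tc_semicontinuous (X : Type) (R : X -> X -> Prop) (tau : topology X) :=
  forall x, t_open tau (fun y => tc R x y).

Definition scc_equiv (X : Type) (R : X -> X -> Prop) (x y : X) : Prop :=
  x = y \/ (tc R x y /\ tc R y x).

(* A ground set of a strong component: an equivalence class of scc_equiv. *)
Definition is_component (X : Type) (R : X -> X -> Prop) (C : X -> Prop) : Prop :=
  exists x, forall y, C y <-> scc_equiv R x y.

Definition contr (X : Type) (R : X -> X -> Prop) (Ci Cj : X -> Prop) : Prop :=
  exists x y, Ci x /\ Cj y /\ R x y.

(* Components are sets; equality of classes is extensional equality. *)
Definition same_set (X : Type) (A B : X -> Prop) : Prop := forall x, A x <-> B x.

Definition contr_maximal (X : Type) (R : X -> X -> Prop) (Ci : X -> Prop) : Prop :=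
  is_component R Ci /\
  ~ (exists Cj, is_component R Cj /\ ~ same_set Cj Ci /\ contr R Cj Ci).

(** By compactness, finitely many upper tc-contour sets [{y | x_i tc y}] cover [X] as soon as
    every point has a strict tc-predecessor.  A tc-minimal point among the finitely many [x_i]
    then has a strict predecessor that no [x_i] can reach, a contradiction.  So some point [x]
    has no strict tc-predecessor, and the strong component of [x] is maximal in the
    contraction. *)
From Stdlib Require Import Classical List Arith Lia.

Section MinimalInCompact.

Variables (X : Type) (S : X -> X -> Prop).
Hypothesis S_trans : forall x y z, S x y -> S y z -> S x z.

Lemma exists_minimal_in_list (l : list X) :
  l <> nil -> exists a, In a l /\ forall b, In b l -> S b a -> S a b.
Proof.
  induction l as [|c l IH]; intro l_ne; [congruence|].
  destruct l as [|d l].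
  - exists c; split; [now left|]. now intros b [<-|[]].
  - destruct IH as [m [Hm m_min]]; [discriminate|].
    destruct (classic (S c m /\ ~ S m c)) as [[Hcm Hmc]|Hnot].
    + exists c; split; [now left|].
      intros b [<-|Hb] Hbc; [assumption|].
      apply S_trans with m; [assumption|].
      apply m_min; [assumption|]. now apply S_trans with c.
    + exists m; split; [now right|].
      intros b [<-|Hb] Hbm; [|now apply m_min].
      apply NNPP. intro Hmb. now apply Hnot.
Qed.

Lemma exists_minimal_of_compact (tau : topology X) :
  inhabited X -> compact_top tau -> (forall x, t_open tau (S x)) ->
  exists x, forall z, S z x -> S x z.
Proof.
  intros [x0] tau_compact S_open.
  apply NNPP. intro no_min.
  assert (strict_pred : forall x, exists z, S z x /\ ~ S x z).
  { intro x. apply NNPP. intro Hx. apply no_min. exists x. intros z Hzx.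
    apply NNPP. intro Hxz. apply Hx. now exists z. }
  destruct (tau_compact X S S_open) as [l cover].
  { intro x. destruct (strict_pred x) as [z [Hzx _]]. now exists z. }
  destruct (exists_minimal_in_list l) as [a [Ha a_min]].
  { destruct (cover x0) as [i [Hi _]]. now destruct l. }
  destruct (strict_pred a) as [w [Hwa Haw]].
  destruct (cover w) as [b [Hb Hbw]].
  apply Haw, S_trans with b; [|assumption].
  apply a_min; [assumption|]. now apply S_trans with w.
Qed.

End MinimalInCompact.

Section StrongComponents.

Variables (X : Type) (R : X -> X -> Prop).

Lemma tc_of_rel x y : R x y -> tc R x y.
Proof.
  intro Hxy. exists 1, (fun k => match k with 0 => x | _ => y end).
  repeat split; [lia|]. intros k Hk. replace k with 1 by lia. exact Hxy.
Qed.

Lemma tc_trans x y z : tc R x y -> tc R y z -> tc R x z.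
Proof.
  intros [K1 [f [HK1 [Hf0 [HfK Hf]]]]] [K2 [g [HK2 [Hg0 [HgK Hg]]]]].
  exists (K1 + K2), (fun k => if k <=? K1 then f k else g (k - K1)).
  repeat split; [lia|..].
  - exact Hf0.
  - destruct (Nat.leb_spec (K1 + K2) K1); [lia|].
    now replace (K1 + K2 - K1) with K2 by lia.
  - intros k Hk.
    destruct (Nat.leb_spec k K1), (Nat.leb_spec (k - 1) K1); try lia.
    + apply Hf. lia.
    + (* the step from [f K1 = g 0] to [g 1] *)
      replace (k - 1) with K1 by lia. rewrite HfK, <- Hg0.
      replace (k - K1) with 1 by lia. apply (Hg 1). lia.
    + replace (k - 1 - K1) with (k - K1 - 1) by lia. apply Hg. lia.
Qed.

Lemma scc_equiv_sym x y : scc_equiv R x y -> scc_equiv R y x.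
Proof. intros [->|[Hxy Hyx]]; [now left|now right]. Qed.

Lemma scc_equiv_trans x y z : scc_equiv R x y -> scc_equiv R y z -> scc_equiv R x z.
Proof.
  intros [->|[Hxy Hyx]] [<-|[Hyz Hzy]]; try now left.
  - now right.
  - now right.
  - right; split; eapply tc_trans; eassumption.
Qed.

Lemma contr_maximal_of_tc_minimal x :
  (forall z, tc R z x -> tc R x z) -> contr_maximal R (scc_equiv R x).
Proof.
  intro x_min. split; [now exists x|].
  intros [C [[c HC] [C_ne [z [w [Hz [Hw Hzw]]]]]]].
  apply C_ne.
  assert (Hzx : tc R z x).
  { destruct Hw as [<-|[_ Hwx]]; [now apply tc_of_rel|].
    eapply tc_trans; [apply tc_of_rel|]; eassumption. }
  assert (Hcx : scc_equiv R c x).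
  { apply scc_equiv_trans with z; [now apply HC|]. right; auto. }
  intro y. rewrite HC. split; intro H.
  - eapply scc_equiv_trans; [apply scc_equiv_sym|]; eassumption.
  - eapply scc_equiv_trans; eassumption.
Qed.

End StrongComponents.

Theorem lemma2 (X : Type) (R : X -> X -> Prop) (tau : topology X) :
  inhabited X ->
  compact_top tau ->
  upper_tc_semicontinuous R tau ->
  exists C : X -> Prop, contr_maximal R C.
Proof.
  intros X_ne tau_compact R_usc.
  destruct (@exists_minimal_of_compact X (tc R) (@tc_trans X R) tau
              X_ne tau_compact R_usc) as [x x_min].
  exists (scc_equiv R x). now apply contr_maximal_of_tc_minimal.
Qed.
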